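(* If $(\lambda,\mu,\nu)$ is a low triple, then $\mathrm{ht}_0^+(\lambda+\mu-\nu)\le2$.
   Context: $\Phi$ is an irreducible reduced root system with basis $\alpha_1,\dots,\alpha_\ell$ numbered as in Bourbaki, fundamental weights $\omega_1,\dots,\omega_\ell$ dual to the simple coroots, weight lattice $\Lambda$, dominant weights $\Lambda^+$; $\mu\le\lambda$ iff $\lambda-\mu$ is a nonnegative integer combination of simple roots. A triple $(\lambda,\mu,\nu)$ of dominant weights is a low triple if (i) whenever $\lambda',\mu'\in\Lambda^+$ with $\lambda'\le\lambda$, $\mu'\le\mu$, $\nu\le\lambda'+\mu'$, then $\lambda'=\lambda$, $\mu'=\mu$; and (ii) $\nu+\sum_{i=1}^\ell\alpha_i\le\lambda+\mu$. Let $I_0\subset\{1,\dots,\ell\}$ be the largest connected set of nodes of the Dynkin diagram containing node $1$ whose subdiagram has only simple edges. For a weight $\lambda=\sum_i a_i\omega_i$ define $\mathrm{ht}_0^+(\lambda)=\sum_{i\in I_0,\,a_i>0}a_i$ if $\Phi$ is not of type $\mathsf F_4$, and, if $\Phi$ is of type $\mathsf F_4$, $\mathrm{ht}_0^+(\lambda)=\max\big(\sum_{i\in\{1,2\},a_i>0}a_i,\ \sum_{i\in\{3,4\},a_i>0}a_i\big)$. *)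

From mathcomp Require Import all_boot all_order all_algebra.
Set Implicit Arguments. Unset Strict Implicit. Unset Printing Implicit Defensive.
Import Order.TTheory GRing.Theory Num.Theory.
Local Open Scope ring_scope.

(* Irreducible reduced root systems, via the classification (Cartan type). *)
Inductive dynkin := TA of nat | TB of nat | TC of nat | TD of nat
                  | TE6 | TE7 | TE8 | TF4 | TG2.

Definition rank (t : dynkin) : nat :=
  match t with
  | TA n | TB n | TC n | TD n => n
  | TE6 => 6 | TE7 => 7 | TE8 => 8 | TF4 => 4 | TG2 => 2
  end.

(* Standard ranges avoiding coincidences: A_n (n>=1), B_n (n>=2), C_n (n>=3), D_n (n>=4). *)
Definition valid_type (t : dynkin) : bool :=
  match t with
  | TA n => (1 <= n)%N | TB n => (2 <= n)%N | TC n => (3 <= n)%N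
  | TD n => (4 <= n)%N | _ => true
  end.

(* Nodes are numbered 0..rank-1; node k corresponds to Bourbaki's alpha_(k+1). *)
Definition chain (i j : nat) : bool := (i.+1 == j) || (j.+1 == i).

Definition E_edges : seq (nat * nat) :=
  [:: (0,2); (2,3); (3,4); (4,5); (5,6); (6,7); (1,3)]%N.

Definition adj (t : dynkin) (i j : nat) : bool :=
  match t with
  | TD n => (chain i j && (maxn i j <= n - 2)%N)
            || ((minn i j == n - 3)%N && (maxn i j == n - 1)%N)
  | TE6 | TE7 | TE8 => ((i, j) \in E_edges) || ((j, i) \in E_edges)
  | _ => chain i j
  end.

Definition sqlen (t : dynkin) (i : nat) : nat :=
  match t with
  | TB n => if (i < n - 1)%N then 2 else 1
  | TC n => if (i < n - 1)%N then 1 else 2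
  | TF4 => if (i < 2)%N then 2 else 1
  | TG2 => if i == 0%N then 1 else 3
  | _ => 1
  end.

(* Cartan integers <alpha_i, alpha_j^vee> = 2 (alpha_i, alpha_j) / (alpha_j, alpha_j) *)
Definition cartan_nat (t : dynkin) (i j : nat) : int :=
  if i == j then 2
  else if adj t i j then - (Posz (maxn 1 (sqlen t i %/ sqlen t j)))
  else 0.

(* Row i = coordinates of the simple root alpha_i in the basis of fundamental
   weights: alpha_i = sum_j <alpha_i, alpha_j^vee> omega_j. *)
Definition cartan (t : dynkin) : 'M[int]_(rank t) :=
  \matrix_(i, j) cartan_nat t i j.

(* Weights are integer row vectors of coordinates w.r.t. omega_1..omega_l. *)
Notation weight t := 'rV[int]_(rank t).

Definition dominant (t : dynkin) (x : weight t) : Prop :=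
  forall i, 0 <= x 0 i.

Definition dom_le (t : dynkin) (mu lam : weight t) : Prop :=
  exists c : 'rV[int]_(rank t), (forall i, 0 <= c 0 i) /\ lam - mu = c *m cartan t.

Definition sum_simple_roots (t : dynkin) : weight t :=
  const_mx 1 *m cartan t.

Definition low_triple (t : dynkin) (lam mu nu : weight t) : Prop :=
  (forall lam' mu' : weight t, dominant lam' -> dominant mu' ->
     dom_le lam' lam -> dom_le mu' mu -> dom_le nu (lam' + mu') ->
     lam' = lam /\ mu' = mu)
  /\ dom_le (nu + sum_simple_roots t) (lam + mu).

Definition simple_edge (t : dynkin) : rel 'I_(rank t) :=
  fun i j => [&& i != j, cartan t i j == -1 & cartan t j i == -1].

(* I_0: the connected component of node 1 (index 0) in the graph of simple
   edges, i.e. the largest connected set of nodes containing node 1 whose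
   subdiagram has only simple edges (Dynkin diagrams are trees). *)
Definition I0 (t : dynkin) : {set 'I_(rank t)} :=
  [set j | [exists i : 'I_(rank t), (val i == 0%N) && connect (@simple_edge t) i j]].

Definition ht_pos (t : dynkin) (S : pred 'I_(rank t)) (x : weight t) : int :=
  \sum_(i | (i \in S) && (0 < x 0 i)) x 0 i.

Definition is_F4 (t : dynkin) : bool := if t is TF4 then true else false.

Definition ht0p (t : dynkin) (x : weight t) : int :=
  if is_F4 t then
    Num.max (ht_pos [pred i : 'I_(rank t) | (val i < 2)%N] x)
            (ht_pos [pred i : 'I_(rank t) | (2 <= val i < 4)%N] x)
  else ht_pos (mem (I0 t)) x.

From mathcomp Require Import all_boot all_order all_algebra.
From mathcomp Require Import zify.
Set Implicit Arguments. Unset Strict Implicit. Unset Printing Implicit Defensive.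
Import Order.TTheory GRing.Theory Num.Theory.
Local Open Scope ring_scope.

(* If lam had a coordinate >= 2 at a node i, or coordinates >= 1 at two distinct
   nodes i, j joined by a chain of simple edges, let a be the sum of the simple
   roots along that chain (just alpha_i when i = j).  The coordinates of a are
   at most 1 at each end (2 when i = j) and at most 0 elsewhere, so lam - a is
   still dominant, and nu <= (lam - a) + mu because nu + sum_k alpha_k <= lam + mu.
   Minimality of the low triple then forces a = 0, which is absurd: Dynkin
   diagrams are trees, so at the chain node that is maximal for a suitable order
   only one neighbour of the chain contributes, and a has coordinate 2 - 1 = 1
   there.  Hence on a set of nodes pairwise joined by simple chains, lam and,
   symmetrically, mu contribute at most 1 each to the positive height. *)

Lemma cartan_ii t (i : 'I_(rank t)) : cartan t i i = 2.
Proof. by rewrite mxE /cartan_nat eqxx. Qed.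

Lemma cartan_le0 t (i j : 'I_(rank t)) : i != j -> cartan t i j <= 0.
Proof.
move=> ne; rewrite mxE /cartan_nat ifN //.
by case: ifP => // _; rewrite oppr_le0.
Qed.

Lemma adj_cartan t (i j : 'I_(rank t)) : i != j -> cartan t i j != 0 -> adj t i j.
Proof. by move=> ne; rewrite mxE /cartan_nat ifN //; case: ifP; rewrite ?eqxx. Qed.

Lemma simple_edge_sym t : symmetric (@simple_edge t).
Proof. by move=> i j; rewrite /simple_edge eq_sym; case: (j != i); rewrite /= 1?andbC. Qed.

Lemma path_neighbour (T : eqType) (e : rel T) x s : symmetric e ->
  path e x s -> s != [::] -> {in x :: s, forall k, exists2 q, q \in x :: s & e k q}.
Proof.
move=> e_sym; elim: s x => [|y s IH] x //= /andP[exy pth] _ k.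
rewrite inE => /orP[/eqP->|ks]; first by exists y; rewrite ?inE ?eqxx ?orbT.
case: s IH pth ks => [|z s] IH pth ks.
  by move: ks; rewrite inE => /eqP->; exists x; rewrite ?inE ?eqxx // e_sym.
by have [q qs ekq] := IH y pth isT k ks; exists q; rewrite // inE qs orbT.
Qed.

Section SumRoots.

Variable t : dynkin.
Implicit Types (L : seq 'I_(rank t)).

Definition root_count L : 'rV[int]_(rank t) := \sum_(p <- L) delta_mx 0 p.

Definition sum_roots L : weight t := root_count L *m cartan t.

Lemma root_countE L k : root_count L 0 k = (count_mem k L)%:Z.
Proof.
rewrite /root_count summxE; elim: L => [|p L IH]; first by rewrite big_nil.
by rewrite big_cons IH mxE /= PoszD natz eq_sym.
Qed.

Lemma sum_rootsE L k : sum_roots L 0 k = \sum_(p <- L) cartan t p k.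
Proof.
rewrite /sum_roots mulmx_suml summxE; apply: eq_bigr => p _.
by rewrite -rowE mxE.
Qed.

Lemma sum_roots_cons p L k : sum_roots (p :: L) 0 k = cartan t p k + sum_roots L 0 k.
Proof. by rewrite !sum_rootsE big_cons. Qed.

Lemma sum_roots_notin L k : k \notin L -> sum_roots L 0 k <= 0.
Proof.
elim: L => [|p L IH]; first by rewrite sum_rootsE big_nil.
rewrite inE negb_or sum_roots_cons => /andP[nkp nkL].
by have := IH nkL; have := @cartan_le0 t p k; rewrite eq_sym nkp; lia.
Qed.

Lemma sum_roots_path_le i s : path (@simple_edge t) i s -> uniq (i :: s) ->
  forall k, sum_roots (i :: s) 0 k <= (k == i)%:R + (k == last i s)%:R.
Proof.
elim: s i => [|j s IH] i /=.
  move=> _ _ k; rewrite sum_roots_cons sum_rootsE big_nil addr0.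
  by case: (eqVneq k i) => [->|nki]; rewrite ?cartan_ii // addr0 cartan_le0 // eq_sym.
move=> /andP[/and3P[_ /eqP Aij /eqP Aji] pth] /andP[]; rewrite inE negb_or.
move=> /andP[nij nis] ujs k; rewrite sum_roots_cons; have := IH j pth ujs k.
case: (eqVneq k i) => [->|nki].
  rewrite cartan_ii (negbTE nij) sum_roots_cons Aji.
  have := sum_roots_notin nis; case: (i == last j s) => /=; lia.
case: (eqVneq k j) => [->|nkj]; first by rewrite Aij; case: (j == last j s) => /=; lia.
by have := @cartan_le0 t i k; rewrite eq_sym nki; lia.
Qed.

(* An injective order in which every node has at most one smaller neighbour;
   its existence certifies that the diagram is a forest. *)
Definition tree_order (o : 'I_(rank t) -> nat) : Prop :=
  injective o /\ forall p q k : 'I_(rank t), p != k -> q != k -> adj t p k -> adj t q k ->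
    (o p < o k)%N -> (o q < o k)%N -> p = q.

Lemma sum_roots_path_neq0 o i s : tree_order o ->
  path (@simple_edge t) i s -> uniq (i :: s) -> sum_roots (i :: s) != 0.
Proof.
move=> [o_inj o_low] pth uis.
have [m /= ms m_max] := @arg_maxnP _ i (fun k => k \in i :: s) o (mem_head i s).
apply/eqP => /matrixP/(_ 0 m); rewrite sum_rootsE mxE.
case: (eqVneq s [::]) ms => [->|s_nil] ms.
  by move: ms; rewrite inE => /eqP->; rewrite big_seq1 cartan_ii.
have [q qs /and3P[nmq _ /eqP Aqm]] := path_neighbour (@simple_edge_sym t) pth s_nil ms.
have lt_m p : p \in i :: s -> p != m -> (o p < o m)%N.
  by move=> ps npm; rewrite ltn_neqAle m_max // andbT (inj_eq o_inj).
rewrite (bigD1_seq m) //= big_mkcond /= (bigD1_seq q) //= eq_sym nmq Aqm cartan_ii.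
rewrite big1_seq ?addr0 // => p /andP[npq ps]; case: (eqVneq p m) => //= npm.
apply/eqP; apply: contraNT npq => /(adj_cartan npm) apm.
have nqm : q != m by rewrite eq_sym.
have aqm : adj t q m by rewrite adj_cartan ?Aqm.
by apply/eqP/(o_low p q m npm nqm apm aqm); apply: lt_m.
Qed.

End SumRoots.

(* For type E the branch node alpha_2 (index 1) is moved last, so that alpha_4
   keeps only alpha_3 as a smaller neighbour. *)
Definition dynkin_order (t : dynkin) (k : nat) : nat :=
  match t with TE6 | TE7 | TE8 => if k == 1%N then 8%N else k | _ => k end.

Lemma tree_orderP t (o : nat -> nat) : injective (fun k : 'I_(rank t) => o k) ->
  let I := iota 0 (rank t) in
  all (fun k => all (fun p => all (fun q =>
    [&& p != k, q != k, adj t p k, adj t q k, (o p < o k)%N & (o q < o k)%N] ==> (p == q))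
    I) I) I ->
  tree_order (fun k : 'I_(rank t) => o k).
Proof.
move=> o_inj I /allP low; split=> // p q k npk nqk apk aqk ltp ltq; apply: ord_inj.
have memI (j : 'I_(rank t)) : (j : nat) \in I by rewrite /I mem_iota ltn_ord.
move: (low k (memI k)) => /allP/(_ p (memI p))/allP/(_ q (memI q)).
by rewrite npk nqk apk aqk ltp ltq => /eqP.
Qed.

Lemma chain_lower_neighbour (p q k : nat) :
  chain p k -> chain q k -> (p < k)%N -> (q < k)%N -> p = q.
Proof. by rewrite /chain => /orP[]/eqP ? /orP[]/eqP ?; lia. Qed.

Lemma dynkin_order_inj t : injective (fun k : 'I_(rank t) => dynkin_order t k).
Proof.
move=> p q; apply: contra_eq => npq; have := ltn_ord p; have := ltn_ord q.
have {}npq : (p : nat) != q by [].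
case: t p q npq => [n|n|n|n| | | | |] p q /= /eqP npq *; apply/eqP;
  try (case: ifP => [/eqP|/negbT/eqP] ?; case: ifP => [/eqP|/negbT/eqP] ?); lia.
Qed.

Lemma dynkin_order_tree t : tree_order (fun k : 'I_(rank t) => dynkin_order t k).
Proof.
case: t => [n|n|n|n| | | | |]; try by apply: tree_orderP; [exact: dynkin_order_inj | vm_compute].
all: split=> [|p q k _ _ /=]; first exact: dynkin_order_inj.
all: move=> apk aqk ltp ltq; apply: ord_inj; move: apk aqk ltp ltq.
4: by rewrite /chain => /orP[/andP[/orP[]/eqP ? ?]|/andP[/eqP ? /eqP ?]]
                        /orP[/andP[/orP[]/eqP ? ?]|/andP[/eqP ? /eqP ?]]; lia.
all: exact: chain_lower_neighbour.
Qed.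

Lemma sum_le1_unique_nonzero (R : numDomainType) (I : finType) (S : {pred I}) (f : I -> R) :
  {in S, forall i, f i <= 1} -> {in S &, forall i j, f i != 0 -> f j != 0 -> i = j} ->
  \sum_(i in S) f i <= 1.
Proof.
move=> f_le1 f_uniq; case: (pickP [pred i | (i \in S) && (f i != 0)]) => [i /andP[Si fi]|f0].
  rewrite (bigD1 i) //= big1 ?addr0 ?f_le1 // => j /andP[Sj nji].
  by apply/eqP; apply: contraNT nji => fj; rewrite (f_uniq j i).
by rewrite big1 // => j Sj; have /= := f0 j; rewrite Sj => /negbFE/eqP.
Qed.

Lemma dom_le_refl t (x : weight t) : dom_le x x.
Proof. by exists 0; split=> [i|]; rewrite ?mxE // subrr mul0mx. Qed.

Lemma dom_le_sub_sum_roots t (x : weight t) L : dom_le (x - sum_roots L) x.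
Proof. by exists (root_count L); split=> [i|]; rewrite ?root_countE // opprB addrC subrK. Qed.

Lemma low_tripleC t (lam mu nu : weight t) : low_triple lam mu nu -> low_triple mu lam nu.
Proof.
move=> [lmin le_nu]; split; last by rewrite [mu + lam]addrC.
move=> mu' lam' dmu' dlam' le_mu le_lam; rewrite addrC => le_nu'.
by have [-> ->] := lmin _ _ dlam' dmu' le_lam le_mu le_nu'.
Qed.

Section LowTriple.

Variables (t : dynkin) (lam mu nu : weight t).
Hypotheses (dom_lam : dominant lam) (dom_mu : dominant mu) (low : low_triple lam mu nu).

Lemma low_triple_dom_le_sub L : uniq L -> dom_le nu (lam - sum_roots L + mu).
Proof.
move=> uL; have [_ [d [d_ge0 def_d]]] := low.
exists (d + const_mx 1 - root_count L); split.
  move=> k; rewrite !mxE root_countE count_uniq_mem //; have := d_ge0 k.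
  by case: (k \in L) => /=; lia.
rewrite !mulmxBl mulmxDl -def_d /sum_roots /sum_simple_roots.
by rewrite opprD addrA subrK [lam - _ + mu]addrAC [RHS]addrAC.
Qed.

Lemma low_triple_sum_roots_eq0 L : uniq L -> dominant (lam - sum_roots L) -> sum_roots L = 0.
Proof.
move=> uL dom_lamS; have [lmin _] := low.
have [e _] := lmin _ _ dom_lamS dom_mu (dom_le_sub_sum_roots lam L) (dom_le_refl mu)
  (low_triple_dom_le_sub uL).
by apply/oppr_inj/(addrI lam); rewrite e oppr0 addr0.
Qed.

Lemma low_triple_path_endpoints i s : path (@simple_edge t) i s -> uniq (i :: s) ->
  ~ (forall k, (k == i)%:R + (k == last i s)%:R <= lam 0 k).
Proof.
move=> pth uis lam_ge; have := sum_roots_path_neq0 (dynkin_order_tree t) pth uis.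
rewrite low_triple_sum_roots_eq0 ?eqxx // => k; rewrite 2!mxE subr_ge0.
exact: le_trans (sum_roots_path_le pth uis k) (lam_ge k).
Qed.

Lemma low_triple_coord_le1 i : lam 0 i <= 1.
Proof.
rewrite leNgt; apply/negP => lam_gt1; apply: (@low_triple_path_endpoints i [::]) => // k /=.
have := dom_lam k; case: (eqVneq k i) => [->|] /=; lia.
Qed.

Lemma low_triple_connected_support i j : 0 < lam 0 i -> 0 < lam 0 j ->
  connect (@simple_edge t) i j -> i = j.
Proof.
move=> lam_i lam_j /connectP[p pth def_j]; move: lam_j; rewrite def_j.
case/shortenP: pth => s pth uis _ lam_j.
have [//|nij] := eqVneq i (last i s); exfalso; apply: (low_triple_path_endpoints pth uis) => k.
have := dom_lam k; case: (eqVneq k i) => [->|_]; first by rewrite (negbTE nij) /=; lia.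
by case: (eqVneq k (last i s)) => [->|_] /=; rewrite add0r // -gtz0_ge1.
Qed.

Lemma low_triple_sum_connected_le1 (S : pred 'I_(rank t)) :
  {in S &, forall i j, connect (@simple_edge t) i j} -> \sum_(i in S) lam 0 i <= 1.
Proof.
move=> S_conn; apply: sum_le1_unique_nonzero => [i _|i j Si Sj lam_i lam_j].
  exact: low_triple_coord_le1.
by apply: low_triple_connected_support (S_conn i j Si Sj); rewrite lt0r dom_lam andbT.
Qed.

End LowTriple.

Lemma ht_pos_le_sum t (S : pred 'I_(rank t)) (x y : weight t) :
  (forall i, x 0 i <= y 0 i) -> dominant y -> ht_pos S x <= \sum_(i in S) y 0 i.
Proof.
move=> le_xy dom_y; rewrite /ht_pos [leRHS](bigID (fun i => 0 < x 0 i)) /=.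
rewrite -[leLHS]addr0 lerD ?sumr_ge0 ?ler_sum // => i _; exact: le_xy.
Qed.

Lemma low_triple_ht_pos_connected t (lam mu nu : weight t) (S : pred 'I_(rank t)) :
  dominant lam -> dominant mu -> dominant nu -> low_triple lam mu nu ->
  {in S &, forall i j, connect (@simple_edge t) i j} -> ht_pos S (lam + mu - nu) <= 2.
Proof.
move=> dom_lam dom_mu dom_nu low S_conn.
have le_sum : forall i, (lam + mu - nu) 0 i <= (lam + mu) 0 i.
  by move=> i; rewrite [X in X <= _]mxE gerDl mxE oppr_le0.
have dom_sum : dominant (lam + mu) by move=> i; rewrite mxE addr_ge0.
have sum_lam := low_triple_sum_connected_le1 dom_lam dom_mu low S_conn.
have sum_mu := low_triple_sum_connected_le1 dom_mu dom_lam (low_tripleC low) S_conn.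
apply: le_trans (ht_pos_le_sum S le_sum dom_sum) _.
rewrite (eq_bigr (fun i => lam 0 i + mu 0 i)) => [|i _]; last by rewrite mxE.
by rewrite big_split; apply: lerD sum_lam sum_mu.
Qed.

Lemma I0_connected t : {in mem (I0 t) &, forall i j, connect (@simple_edge t) i j}.
Proof.
move=> i j; rewrite !inE => /existsP[r /andP[/eqP r0 ri]] /existsP[r' /andP[/eqP r0' r'j]].
have r'r : r' = r by apply: val_inj; rewrite /= r0 r0'.
rewrite r'r in r'j; apply: connect_trans r'j.
by rewrite (sym_connect_sym (@simple_edge_sym t)).
Qed.

Lemma F4_connected (i j : 'I_(rank TF4)) :
  (val i < 2)%N = (val j < 2)%N -> connect (@simple_edge TF4) i j.
Proof.
have [->|nij] := eqVneq i j; first by rewrite connect0.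
move=> e; apply: connect1; move: nij e; rewrite /simple_edge !mxE.
by case: i j => [[|[|[|[|?]]]] ?] [[|[|[|[|?]]]] ?].
Qed.

Theorem mainTheorem14 (t : dynkin) (lam mu nu : 'rV[int]_(rank t)) :
  valid_type t ->
  dominant lam -> dominant mu -> dominant nu ->
  low_triple lam mu nu ->
  ht0p (lam + mu - nu) <= 2.
Proof.
(* The bound holds for every Cartan type. *)
move=> _ dom_lam dom_mu dom_nu low; rewrite /ht0p.
have ht_le2 S := low_triple_ht_pos_connected (S := S) dom_lam dom_mu dom_nu low.
case: ifP => [F4|_]; last exact/ht_le2/I0_connected.
case: t F4 lam mu nu dom_lam dom_mu dom_nu low ht_le2 => // _ lam mu nu _ _ _ _ ht_le2.
by rewrite ge_max !ht_le2 // => i j; rewrite !inE => lt_i lt_j; apply: F4_connected; lia.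
Qed.
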